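(* Let $\{I_x\}_{x\in(0,1]}$ be a family of nonempty half-open intervals of the form $I_x=(y_x,x]\subset(0,1]$ (so $0\le y_x<x$). Then there exists a set $C\subset(0,1]$ such that $\bigcup_{x\in C}I_x=(0,1]$ and the intervals $I_y$, $I_z$ are disjoint whenever $y,z\in C$, $y\ne z$. *)

From Stdlib Require Import Reals.
Open Scope R_scope.

Definition Ioc (a b : R) : R -> Prop := fun t => a < t /\ t <= b.

(* Any two partial tilings of final segments (a, 1] and (a', 1] by intervals I_x
   agree where both are defined: at the supremum of the points where they would
   disagree, either they disagree (and then the right end of the shorter of the
   two intervals is a larger point of disagreement), or they share an interval
   reaching to the left of that supremum.  Hence all partial tilings glue to a
   tiling of (g, 1], with g the infimum of the tileable a.  If g > 0, adding
   the interval I_g gives a tiling of (y g, 1] with y g < g, so g = 0. *)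

From Stdlib Require Import Reals Lra Classical.
Open Scope R_scope.

Lemma glb_exists (A : R -> Prop) (m a0 : R) :
  (forall a, A a -> m <= a) -> A a0 ->
  exists g, (forall a, A a -> g <= a) /\ (forall v, g < v -> exists a, A a /\ a < v).
Proof.
  intros Hm Ha0.
  pose (E := fun z => A (- z)).
  assert (bE : bound E) by (exists (- m); intros z Ez; specialize (Hm _ Ez); lra).
  assert (E0 : E (- a0)) by (unfold E; rewrite Ropp_involutive; exact Ha0).
  destruct (completeness E bE (ex_intro _ _ E0)) as [L [HubL HleL]].
  exists (- L); split.
  - intros a Aa.
    assert (Ea : E (- a)) by (unfold E; rewrite Ropp_involutive; exact Aa).
    specialize (HubL _ Ea); lra.
  - intros v Hv; apply NNPP; intros Hnone.
    assert (Hub : is_upper_bound E (- v)).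
    { intros z Ez; apply Rnot_lt_le; intros Hz; apply Hnone.
      exists (- z); split; [exact Ez | lra]. }
    specialize (HleL _ Hub); lra.
Qed.

Lemma empty_of_no_max_of_left_gaps (B : R -> Prop) (m b : R) :
  (forall s, B s -> m < s <= b) ->
  (forall s, B s -> exists s', s < s' /\ B s') ->
  (forall u, m < u <= b -> ~ B u ->
     exists v, v < u /\ forall s, v < s <= u -> ~ B s) ->
  forall t, ~ B t.
Proof.
  intros HB Hnomax Hgap t Bt.
  assert (bB : bound B) by (exists b; intros s Bs; apply (HB s Bs)).
  destruct (completeness B bB (ex_intro _ t Bt)) as [u [Hub Hleast]].
  assert (Hu : m < u <= b).
  { pose proof (HB t Bt); pose proof (Hub t Bt).
    split; [lra | apply Hleast; intros s Bs; apply (HB s Bs)]. }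
  destruct (classic (B u)) as [Bu | nBu].
  - destruct (Hnomax u Bu) as [s' [Hs' Bs']].
    specialize (Hub s' Bs'); lra.
  - destruct (Hgap u Hu nBu) as [v [Hvu Hfree]].
    assert (Hv : is_upper_bound B v).
    { intros s Bs; apply Rnot_lt_le; intros Hvs.
      apply (Hfree s); [split; [lra | apply (Hub s Bs)] | exact Bs]. }
    specialize (Hleast v Hv); lra.
Qed.

Section Tiling.

Variable y : R -> R.

Definition disjoint_family (D : R -> Prop) :=
  forall u v, D u -> D v -> u <> v -> forall t, ~ (Ioc (y u) u t /\ Ioc (y v) v t).

Definition tiles (a : R) (D : R -> Prop) :=
  (forall x, D x -> 0 < x <= 1) /\
  (forall t, a < t <= 1 <-> exists x, D x /\ Ioc (y x) x t) /\
  disjoint_family D.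

Lemma disjoint_family_owner_unique D x x' t :
  disjoint_family D -> D x -> D x' -> Ioc (y x) x t -> Ioc (y x') x' t -> x = x'.
Proof.
  intros HD Dx Dx' It It'.
  apply NNPP; intros Hne; exact (HD x x' Dx Dx' Hne t (conj It It')).
Qed.

Lemma tiles_empty : tiles 1 (fun _ => False).
Proof.
  split; [tauto | split].
  - intros t; split; [lra | intros [x [[] _]]].
  - intros u v [].
Qed.

Lemma tiles_extend a D :
  tiles a D -> 0 < a <= 1 -> y a < a -> tiles (y a) (fun x => D x \/ x = a).
Proof.
  intros [Hrange [Hcover Hdisj]] Ha Hya.
  assert (Hinside : forall x t, D x -> Ioc (y x) x t -> a < t).
  { intros x t Dx It; apply (proj2 (Hcover t)); eauto. }
  split; [| split].
  - intros x [Dx | ->]; auto.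
  - intros t; split.
    + intros Ht; destruct (Rle_or_lt t a) as [Hta | Hat].
      * exists a; split; [right; reflexivity | unfold Ioc; lra].
      * destruct (proj1 (Hcover t)) as [x [Dx It]]; [lra |].
        exists x; split; [left |]; assumption.
    + intros [x [[Dx | ->] It]].
      * pose proof (proj2 (Hcover t) (ex_intro _ x (conj Dx It))); lra.
      * unfold Ioc in It; lra.
  - intros u v [Du | ->] [Dv | ->] Huv t [It It'].
    + exact (Hdisj u v Du Dv Huv t (conj It It')).
    + specialize (Hinside u t Du It); unfold Ioc in It'; lra.
    + specialize (Hinside v t Dv It'); unfold Ioc in It; lra.
    + exact (Huv eq_refl).
Qed.

Section Agreement.

Variables (a a' : R) (D D' : R -> Prop).
Hypothesis tD : tiles a D.
Hypothesis tD' : tiles a' D'.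

Definition disagreement (t : R) :=
  Rmax a a' < t <= 1 /\
  exists z z', D z /\ D' z' /\ z <> z' /\ Ioc (y z) z t /\ Ioc (y z') z' t.

Lemma disagreement_no_max s : disagreement s -> exists s', s < s' /\ disagreement s'.
Proof.
  destruct tD as [HD1 [HD2 HD3]], tD' as [HE1 [HE2 HE3]].
  intros [[Hms Hs1] [z [z' [Dz [Ez' [Hzz [Iz Iz']]]]]]].
  pose proof (HD1 z Dz); pose proof (HE1 z' Ez'); unfold Ioc in Iz, Iz'.
  pose proof (Rmax_l a a'); pose proof (Rmax_r a a').
  destruct (Rlt_or_le z z') as [Hlt | Hle].
  - (* the point z' lies in I_z' but, in D, in an interval other than I_z' *)
    destruct (proj1 (HD2 z')) as [w [Dw Iw]]; [lra |].
    exists z'; split; [lra | split; [split; lra |]].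
    exists w, z'; repeat split; auto; unfold Ioc in *; try lra.
    intros ->; apply (HD3 z' z Dw Dz (not_eq_sym Hzz) s); unfold Ioc; lra.
  - assert (Hlt : z' < z) by (destruct Hle; [assumption | subst; tauto]).
    destruct (proj1 (HE2 z)) as [w [Ew Iw]]; [lra |].
    exists z; split; [lra | split; [split; lra |]].
    exists z, w; repeat split; auto; unfold Ioc in *; try lra.
    intros <-; apply (HE3 z z' Ew Ez' Hzz s); unfold Ioc; lra.
Qed.

Lemma disagreement_left_gap u :
  Rmax a a' < u <= 1 -> ~ disagreement u ->
  exists v, v < u /\ forall s, v < s <= u -> ~ disagreement s.
Proof.
  destruct tD as [_ [HD2 HD3]], tD' as [_ [HE2 HE3]].
  intros Hu nBu.
  pose proof (Rmax_l a a'); pose proof (Rmax_r a a').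
  destruct (proj1 (HD2 u)) as [w [Dw Iw]]; [lra |].
  destruct (proj1 (HE2 u)) as [w' [Ew' Iw']]; [lra |].
  assert (w = w') as <-.
  { apply NNPP; intros Hne; apply nBu; split; [exact Hu |]; exists w, w'; auto. }
  exists (Rmax (y w) (Rmax a a')); unfold Ioc in Iw; split.
  - apply Rmax_lub_lt; lra.
  - intros s [Hvs Hsu] [_ [z [z' [Dz [Ez' [Hzz [Iz Iz']]]]]]].
    pose proof (Rmax_l (y w) (Rmax a a')).
    assert (Isw : Ioc (y w) w s) by (unfold Ioc; lra).
    apply Hzz.
    rewrite (disjoint_family_owner_unique D z w s HD3 Dz Dw Iz Isw).
    exact (disjoint_family_owner_unique D' w z' s HE3 Ew' Ez' Isw Iz').
Qed.

Lemma tiles_agree x x' t :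
  D x -> D' x' -> Ioc (y x) x t -> Ioc (y x') x' t -> x = x'.
Proof.
  intros Dx Ex' It It'; apply NNPP; intros Hne.
  apply (empty_of_no_max_of_left_gaps disagreement (Rmax a a') 1
           (fun s Bs => proj1 Bs) disagreement_no_max disagreement_left_gap t).
  destruct tD as [_ [HD2 _]], tD' as [_ [HE2 _]].
  pose proof (proj2 (HD2 t) (ex_intro _ x (conj Dx It))).
  pose proof (proj2 (HE2 t) (ex_intro _ x' (conj Ex' It'))).
  split; [split; [apply Rmax_lub_lt; lra | lra] |].
  exists x, x'; auto.
Qed.

End Agreement.

Definition tileable (a : R) := 0 <= a /\ exists D, tiles a D.

Definition tiling_union (x : R) := exists a D, 0 <= a /\ tiles a D /\ D x.

Lemma tiling_union_glb g :
  (forall a, tileable a -> g <= a) ->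
  (forall v, g < v -> exists a, tileable a /\ a < v) ->
  tiles g tiling_union.
Proof.
  intros Hlow Happrox; split; [| split].
  - intros x [a [D [_ [[Hrange _] Dx]]]]; auto.
  - intros t; split.
    + intros Ht; destruct (Happrox t (proj1 Ht)) as [a [[Ha [D tD]] Hat]].
      destruct (proj1 (proj1 (proj2 tD) t)) as [x [Dx It]]; [lra |].
      exists x; split; [exists a, D |]; auto.
    + intros [x [[a [D [Ha [tD Dx]]]] It]].
      pose proof (proj2 (proj1 (proj2 tD) t) (ex_intro _ x (conj Dx It))).
      assert (g <= a) by (apply Hlow; split; [| exists D]; assumption).
      lra.
  - intros u v [a [D [_ [tD Du]]]] [a' [D' [_ [tD' Dv]]]] Huv t [It It'].
    exact (Huv (tiles_agree a a' D D' tD tD' u v t Du Dv It It')).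
Qed.

End Tiling.

Theorem mainTheorem11 (y : R -> R)
  (hy : forall x, 0 < x <= 1 -> 0 <= y x < x) :
  exists C : R -> Prop,
    (forall x, C x -> 0 < x <= 1) /\
    (forall t, (0 < t <= 1) <-> exists x, C x /\ Ioc (y x) x t) /\
    (forall u v, C u -> C v -> u <> v ->
       forall t, ~ (Ioc (y u) u t /\ Ioc (y v) v t)).
Proof.
  assert (tileable1 : tileable y 1) by (split; [lra | exists (fun _ => False); apply tiles_empty]).
  destruct (glb_exists (tileable y) 0 1 (fun a Ha => proj1 Ha) tileable1)
    as [g [Hlow Happrox]].
  pose proof (tiling_union_glb y g Hlow Happrox) as tU.
  assert (Hg1 : g <= 1) by exact (Hlow 1 tileable1).
  assert (Hg : g = 0).
  { destruct (Rtotal_order g 0) as [Hneg | [Hzero | Hpos]]; [exfalso | exact Hzero | exfalso].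
    - destruct (Happrox 0 Hneg) as [a [[Ha _] Ha0]]; lra.
    - destruct (hy g (conj Hpos Hg1)) as [Hyg0 Hyg].
      assert (Hext : tileable y (y g)).
      { split; [exact Hyg0 |]; eexists; exact (tiles_extend y g _ tU (conj Hpos Hg1) Hyg). }
      specialize (Hlow _ Hext); lra. }
  exists (tiling_union y); rewrite Hg in tU; exact tU.
Qed.
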